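(* There is an absolute constant $c>0$ such that the following holds for all sufficiently large $n$. Let $L_1,\dots,L_n\colon\mathbb{F}_2^m\to\mathbb{F}_2$ be polynomials of degree at most $1$ and let $\mathcal{L}=(L_1,\dots,L_n)$ be the distribution on $\{0,1\}^n$ of $(L_1(X),\dots,L_n(X))$ for $X$ uniform on $\mathbb{F}_2^m$. Then \[ \|\mathcal{L}-\mathrm{Ber}(1/3)^{\otimes n}\|_{\mathtt{TV}}\ \ge\ 1-2^{-cn}. \]
   Context: $\mathrm{Ber}(1/3)^{\otimes n}$ is the product of $n$ independent Bernoulli$(1/3)$ bits. The total variation distance is $\|\mathcal{D}_1-\mathcal{D}_2\|_{\mathtt{TV}}=\frac12\sum_x|\mathcal{D}_1(x)-\mathcal{D}_2(x)|$. *)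

From HB Require Import structures.
From mathcomp Require Import Rstruct.
From mathcomp Require Import all_boot all_order all_algebra.
From mathcomp Require Import reals exp.
Set Implicit Arguments. Unset Strict Implicit. Unset Printing Implicit Defensive.
Import Order.TTheory GRing.Theory Num.Theory.
Local Open Scope ring_scope.

Definition realR : realType := Rdefinitions.R.

Definition affine_map (m : nat) (a : 'rV['F_2]_m) (b : 'F_2)
  (x : 'rV['F_2]_m) : 'F_2 := b + \sum_(j < m) a 0 j * x 0 j.

Definition lin_distr (n m : nat) (a : 'I_n -> 'rV['F_2]_m) (b : 'I_n -> 'F_2)
  (y : 'rV['F_2]_n) : realR :=
  #|[set x : 'rV['F_2]_m | [forall i, affine_map (a i) (b i) x == y 0 i]]|%:R
  / #|{: 'rV['F_2]_m}|%:R.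

Definition ber_prod (n : nat) (p : realR) (y : 'rV['F_2]_n) : realR :=
  \prod_(i < n) (if y 0 i == 1 then p else 1 - p).

Definition tv_dist (T : finType) (D1 D2 : T -> realR) : realR :=
  2^-1 * \sum_(x : T) `|D1 x - D2 x|.
Arguments ber_prod n p y : clear implicits.

From HB Require Import structures.
From mathcomp Require Import Rstruct.
From mathcomp Require Import all_boot all_order all_algebra.
From mathcomp Require Import reals exp.
From mathcomp Require Import ring lra.
Import Order.TTheory GRing.Theory Num.Theory.
Set Implicit Arguments. Unset Strict Implicit. Unset Printing Implicit Defensive.
Local Open Scope ring_scope.

(* The Bhattacharyya coefficient BC(P, Q) = sum_y sqrt (P y * Q y) satisfies
   TV(P, Q) >= 1 - BC(P, Q).  Reveal the bits of y one at a time: the seeds x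
   consistent with the first i bits form an affine subspace, on which the next
   affine form is either constant or balanced.  Accordingly the i-th bit
   multiplies BC by at most sqrt (2/3) or by at most sqrt (1/6) + sqrt (1/3) < 0.986,
   so BC <= rho ^ n with rho = 0.99, and c = log2 (1 / rho) works for every n. *)

Section Bhattacharyya.
Variable R : rcfType.

Definition bhatt (T : finType) (P Q : T -> R) : R := \sum_x Num.sqrt (P x * Q x).

Lemma sub_sqrt_mul_le_norm (u v : R) : 0 <= u -> 0 <= v ->
  u + v - 2 * Num.sqrt (u * v) <= `|u - v|.
Proof.
move=> u0 v0; rewrite sqrtrM //.
have su := sqr_sqrtr u0; have sv := sqr_sqrtr v0.
have := sqrtr_ge0 u; have := sqrtr_ge0 v.
set x := Num.sqrt u in su *; set y := Num.sqrt v in sv * => y0 x0.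
rewrite ler_normr; case: (lerP y x) => xy; apply/orP; [left|right]; nra.
Qed.

End Bhattacharyya.

Lemma tv_dist_ge_bhatt (T : finType) (P Q : T -> realR) :
  (forall x, 0 <= P x) -> (forall x, 0 <= Q x) ->
  \sum_x P x = 1 -> \sum_x Q x = 1 -> 1 - bhatt P Q <= tv_dist P Q.
Proof.
move=> P0 Q0 sP sQ.
have : \sum_x (P x + Q x - 2 * Num.sqrt (P x * Q x)) <= \sum_x `|P x - Q x|.
  by apply: ler_sum => x _; apply: sub_sqrt_mul_le_norm.
rewrite /tv_dist /bhatt !big_split /= sP sQ sumrN -mulr_sumr; lra.
Qed.

Lemma sum_card_fibres (T U : finType) (f : T -> U) :
  (\sum_u #|[set x | f x == u]|)%N = #|T|.
Proof.
rewrite -sum1_card (partition_big f xpredT) //=; apply: eq_bigr => u _.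
by rewrite -sum1_card; apply: eq_bigl => x; rewrite inE.
Qed.

Lemma sum_rV_prod (R : comNzRingType) (V : finType) n (F : 'I_n -> V -> R) :
  \sum_(y : 'rV[V]_n) \prod_i F i (y 0 i) = \prod_i \sum_v F i v.
Proof.
rewrite bigA_distr_bigA /= (reindex (fun f : {ffun 'I_n -> V} => \row_i f i)) /=.
  by apply: eq_bigr => f _; apply: eq_bigr => i _; rewrite mxE.
exists (fun y => [ffun i => y 0 i]) => [f _ | y _]; first by apply/ffunP => i; rewrite ffunE mxE.
by apply/rowP => i; rewrite !mxE ffunE.
Qed.

Lemma big_ord_prefixS (R : Type) (idx : R) (op : Monoid.com_law idx) n (i : 'I_n)
    (F : 'I_n -> R) :
  \big[op/idx]_(j < n | (j < i.+1)%N) F j = op (F i) (\big[op/idx]_(j < n | (j < i)%N) F j).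
Proof.
rewrite (bigD1 i) ?ltnSn //=; apply: congr1; apply: eq_bigl => j.
by rewrite ltnS leq_eqVlt -(inj_eq val_inj); case: ltngtP.
Qed.

Section AffineFibres.
Variables (V : finZmodType) (W : zmodType) (A : {set V}) (f : V -> W).
Hypothesis A_affine : forall x y z, x \in A -> y \in A -> z \in A -> x + y - z \in A.
Hypothesis f_affine : forall x y z, f (x + y - z) = f x + f y - f z.

Lemma card_affine_fibre_le x0 x1 : x0 \in A -> x1 \in A ->
  (#|[set x in A | f x == f x0]| <= #|[set x in A | f x == f x1]|)%N.
Proof.
move=> Ax0 Ax1; rewrite -(card_imset _ (addIr (x1 - x0))).
apply/subset_leq_card/subsetP => _ /imsetP [x + ->]; rewrite !inE => /andP [Ax /eqP fx].
by rewrite addrA A_affine //= f_affine fx addrC addKr.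
Qed.

Lemma card_affine_fibres (v w : W) :
  let c u := #|[set x in A | f x == u]| in [\/ c v = 0%N, c w = 0%N | c v = c w].
Proof.
rewrite /=; have [-> | [x0 /setIdP [Ax0 /eqP <-]]] := set_0Vmem [set x in A | f x == v].
  by apply: Or31; rewrite cards0.
have [-> | [x1 /setIdP [Ax1 /eqP <-]]] := set_0Vmem [set x in A | f x == w].
  by apply: Or32; rewrite cards0.
by apply: Or33; apply/eqP; rewrite eqn_leq !card_affine_fibre_le.
Qed.

End AffineFibres.

Section Flip.
Variable n : nat.
Implicit Types (i : 'I_n) (y : 'rV['F_2]_n).

Definition flip i y : 'rV['F_2]_n := y + delta_mx 0 i.

Lemma flipE i y j : flip i y 0 j = y 0 j + (j == i)%:R.
Proof. by rewrite !mxE eqxx. Qed.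

Lemma flip_prefix i y (j : 'I_n) : (j < i)%N -> flip i y 0 j = y 0 j.
Proof. by move=> ji; rewrite flipE -(inj_eq val_inj) ltn_eqF ?addr0. Qed.

Lemma flip_at i y : flip i y 0 i = y 0 i + 1.
Proof. by rewrite flipE eqxx. Qed.

Variable R : realFieldType.

Lemma sum_flip_le (h h' : 'rV['F_2]_n -> R) i (r : R) :
  (forall y, h' y + h' (flip i y) <= r * h y) ->
  \sum_y h' y <= r / 2 * \sum_y h y.
Proof.
move=> hh'; have sum_flip : \sum_y h' (flip i y) = \sum_y h' y.
  by rewrite [RHS](reindex_inj (addIr (delta_mx 0 i))).
have : \sum_y (h' y + h' (flip i y)) <= \sum_y r * h y by apply: ler_sum.
rewrite big_split /= sum_flip -mulr_sumr; lra.
Qed.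

Lemma sum_flip_iter_le (h : nat -> 'rV['F_2]_n -> R) (r : R) : 0 <= r ->
  (forall i y, h i.+1 y + h i.+1 (flip i y) <= r * h i y) ->
  \sum_y h n y <= (r / 2) ^+ n * \sum_y h 0%N y.
Proof.
move=> r0 hS.
suff le_k k : (k <= n)%N -> \sum_y h k y <= (r / 2) ^+ k * \sum_y h 0%N y by exact: le_k.
elim: k => [|k IHk] kn; first by rewrite mul1r.
apply: le_trans (sum_flip_le (hS (Ordinal kn))) _.
have r20 : 0 <= r / 2 by exact: divr_ge0.
by apply: le_trans (ler_wpM2l r20 (IHk (ltnW kn))) _; rewrite exprS mulrA.
Qed.

End Flip.

Lemma powR2_neg_log2 (R : realType) (r : R) (n : nat) : 0 < r ->
  powR 2 (- (- ln r / ln 2 * n%:R)) = r ^+ n.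
Proof.
move=> r0; have ln2 : ln (2 : R) != 0 by rewrite gt_eqF // ln_gt0 // ltr1n.
have two : ((2 : R) == 0) = false by rewrite pnatr_eq0.
rewrite /powR two (_ : _ * ln 2 = ln r * n%:R); last by field.
by rewrite mulr_natr -lnXn // lnK // posrE exprn_gt0.
Qed.

Definition bit_prob (p : realR) (v : 'F_2) : realR := if v == 1 then p else 1 - p.

Lemma bit_prob_add1 p v : bit_prob p (v + 1) = 1 - bit_prob p v.
Proof. by case: v => [[|[|//]] ?]; rewrite /bit_prob /=; lra. Qed.

Lemma bit_prob_ge0 p v : 0 <= p <= 1 -> 0 <= bit_prob p v.
Proof. by rewrite /bit_prob; case: ifP => _; lra. Qed.

Lemma third_in01 : 0 <= (3^-1 : realR) <= 1.
Proof. by rewrite invr_ge0 invf_le1; lra. Qed.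

Lemma sum_ber_prod n p : \sum_y ber_prod n p y = 1.
Proof.
rewrite (sum_rV_prod (fun _ v => if v == 1 then p else 1 - p)); apply: big1 => i _.
by rewrite !big_ord_recl big_ord0 /= addr0 subrK.
Qed.

Lemma natr_card_rV_neq0 m : #|{: 'rV['F_2]_m}|%:R != 0 :> realR.
Proof. by rewrite pnatr_eq0 -lt0n; apply/card_gt0P; exists 0. Qed.

Lemma affine_mapE m (a : 'rV['F_2]_m) b (x y z : 'rV['F_2]_m) :
  affine_map a b (x + y - z) = affine_map a b x + affine_map a b y - affine_map a b z.
Proof.
rewrite /affine_map.
have -> : \sum_(j < m) a 0 j * (x + y - z) 0 j = \sum_(j < m) a 0 j * x 0 j
    + \sum_(j < m) a 0 j * y 0 j - \sum_(j < m) a 0 j * z 0 j.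
  by rewrite -big_split -sumrB /=; apply: eq_bigr => j _; rewrite !mxE; ring.
by ring.
Qed.

Lemma F2_eq_add1 (u v : 'F_2) : (u == v + 1) = (u != v).
Proof. by case: u => [[|[|//]] ?]; case: v => [[|[|//]] ?]. Qed.

Definition rho : realR := 99 / 100.

Lemma sqrt_third_bounds :
  [/\ Num.sqrt (3^-1 : realR) <= 578 / 1000, Num.sqrt (1 - 3^-1 : realR) <= 817 / 1000
    & 1414 / 1000 <= Num.sqrt (2 : realR)].
Proof.
have third : (3^-1 : realR) = 1 / 3 by rewrite div1r.
have s1 : Num.sqrt (1 / 3) ^+ 2 = 1 / 3 :> realR by apply: sqr_sqrtr; lra.
have s2 : Num.sqrt (1 - 1 / 3) ^+ 2 = 1 - 1 / 3 :> realR by apply: sqr_sqrtr; lra.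
have s3 : Num.sqrt 2 ^+ 2 = 2 :> realR by apply: sqr_sqrtr; lra.
have := sqrtr_ge0 (1 / 3 : realR); have := sqrtr_ge0 (1 - 1 / 3 : realR).
have := sqrtr_ge0 (2 : realR).
by rewrite third => g3 g2 g1; split; nra.
Qed.

Lemma sqrt_split_le (u0 u1 p : realR) : 0 <= u0 -> 0 <= u1 ->
  [\/ u0 = 0, u1 = 0 | u0 = u1] -> p = 3^-1 \/ p = 1 - 3^-1 ->
  Num.sqrt (u0 * p) + Num.sqrt (u1 * (1 - p)) <= rho * Num.sqrt (u0 + u1).
Proof.
move=> u00 u10 hu hp; have [b1 b2 b3] := sqrt_third_bounds.
have g1 := sqrtr_ge0 (3^-1 : realR); have g2 := sqrtr_ge0 (1 - 3^-1 : realR).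
have p1 : 1 - (1 - 3^-1) = 3^-1 :> realR by ring.
have [sp sq spq] : [/\ Num.sqrt p <= rho, Num.sqrt (1 - p) <= rho
                     & Num.sqrt p + Num.sqrt (1 - p) <= rho * Num.sqrt 2].
  by rewrite /rho; case: hp => ->; rewrite ?p1; split; lra.
case: hu => [->|->|<-].
- by rewrite mul0r sqrtr0 add0r add0r sqrtrM // mulrC ler_wpM2r // sqrtr_ge0.
- by rewrite mul0r sqrtr0 addr0 addr0 sqrtrM // mulrC ler_wpM2r // sqrtr_ge0.
- rewrite -mulr2n -mulr_natr !sqrtrM // -mulrDr mulrCA.
  by apply: ler_wpM2l; first exact: sqrtr_ge0.
Qed.

Section LinearForms.
Variables (n m : nat) (a : 'I_n -> 'rV['F_2]_m) (b : 'I_n -> 'F_2).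
Implicit Types (i : 'I_n) (y : 'rV['F_2]_n).

Definition prefix_fibre k y : {set 'rV['F_2]_m} :=
  \bigcap_(j < n | (j < k)%N) [set x | affine_map (a j) (b j) x == y 0 j].

Definition prefix_lin k y : realR := #|prefix_fibre k y|%:R / #|{: 'rV['F_2]_m}|%:R.

Definition prefix_ber k y : realR := \prod_(j < n | (j < k)%N) bit_prob 3^-1 (y 0 j).

Definition prefix_bhatt k y : realR := Num.sqrt (prefix_lin k y * prefix_ber k y).

Lemma prefix_fibre_affine k y x x' x'' :
  x \in prefix_fibre k y -> x' \in prefix_fibre k y -> x'' \in prefix_fibre k y ->
  x + x' - x'' \in prefix_fibre k y.
Proof.
move=> /bigcapP hx /bigcapP hx' /bigcapP hx''; apply/bigcapP => j jk.
move: (hx j jk) (hx' j jk) (hx'' j jk); rewrite !inE affine_mapE => /eqP-> /eqP-> /eqP->.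
by rewrite addrK.
Qed.

Lemma prefix_fibreS i y :
  prefix_fibre i.+1 y = [set x in prefix_fibre i y | affine_map (a i) (b i) x == y 0 i].
Proof. by rewrite /prefix_fibre big_ord_prefixS; apply/setP => x; rewrite !inE andbC. Qed.

Lemma prefix_fibre_flipS i y :
  prefix_fibre i.+1 (flip i y) =
  [set x in prefix_fibre i y | affine_map (a i) (b i) x == y 0 i + 1].
Proof.
rewrite prefix_fibreS flip_at (_ : prefix_fibre i (flip i y) = prefix_fibre i y) //.
by apply: eq_bigr => j ji; rewrite flip_prefix.
Qed.

Lemma prefix_berS i y : prefix_ber i.+1 y = bit_prob 3^-1 (y 0 i) * prefix_ber i y.
Proof. exact: big_ord_prefixS. Qed.

Lemma prefix_ber_flipS i y :
  prefix_ber i.+1 (flip i y) = (1 - bit_prob 3^-1 (y 0 i)) * prefix_ber i y.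
Proof.
rewrite prefix_berS flip_at bit_prob_add1; congr (_ * _).
by apply: eq_bigr => j ji; rewrite flip_prefix.
Qed.

Lemma prefix_ber_ge0 k y : 0 <= prefix_ber k y.
Proof. by apply: prodr_ge0 => j _; apply/bit_prob_ge0/third_in01. Qed.

Lemma prefix_bhattS i y :
  prefix_bhatt i.+1 y + prefix_bhatt i.+1 (flip i y) <= rho * prefix_bhatt i y.
Proof.
set A := prefix_fibre i y; set f := affine_map (a i) (b i); set v := y 0 i.
have card_split : #|A| = (#|[set x in A | f x == v]| + #|[set x in A | f x == (v + 1)%R]|)%N.
  rewrite -(cardsID [set x | f x == v] A); congr (_ + _)%N; apply: eq_card => x.
    by rewrite !inE andbC.
  by rewrite !inE F2_eq_add1 andbC.
have := card_affine_fibres (@prefix_fibre_affine i y) (affine_mapE (a i) (b i)) v (v + 1).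
rewrite /prefix_bhatt /prefix_lin prefix_fibreS prefix_fibre_flipS prefix_berS prefix_ber_flipS.
rewrite -/A -/f -/v card_split /=.
set c0 := #|[set x in A | f x == v]|; set c1 := #|[set x in A | f x == v + 1]|.
set N : realR := #|{: 'rV['F_2]_m}|%:R; set p := bit_prob _ v; set M := prefix_ber i y.
move=> dich.
have weight c q : c%:R / N * (q * M) = (c%:R / N * M) * q by ring.
have M0 : 0 <= M := prefix_ber_ge0 i y.
rewrite !weight natrD mulrDl mulrDl; apply: sqrt_split_le.
- by rewrite !mulr_ge0 ?invr_ge0.
- by rewrite !mulr_ge0 ?invr_ge0.
- by case: dich => ->; [apply: Or31 | apply: Or32 | apply: Or33]; rewrite ?mul0r.
- by rewrite /p /bit_prob; case: ifP; [left | right].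
Qed.

Lemma prefix_bhatt0 y : prefix_bhatt 0 y = 1.
Proof.
rewrite /prefix_bhatt /prefix_lin /prefix_ber /prefix_fibre !big_pred0 //.
by rewrite cardsT divff ?mulr1 ?sqrtr1 ?natr_card_rV_neq0.
Qed.

Lemma lin_distr_prefix y : lin_distr a b y = prefix_lin n y.
Proof.
rewrite /lin_distr /prefix_lin; congr (_%:R / _); apply: eq_card => x.
rewrite inE; apply/forallP/bigcapP => [fx j _ | fx j]; first by rewrite inE fx.
by have := fx j (ltn_ord j); rewrite inE.
Qed.

Lemma ber_prod_prefix y : ber_prod n 3^-1 y = prefix_ber n y.
Proof. by apply: eq_bigl => j; rewrite ltn_ord. Qed.

Lemma bhatt_lin_distr_ber_prod : bhatt (lin_distr a b) (ber_prod n 3^-1) <= rho ^+ n.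
Proof.
have -> : bhatt (lin_distr a b) (ber_prod n 3^-1) = \sum_y prefix_bhatt n y.
  by apply: eq_bigr => y _; rewrite lin_distr_prefix ber_prod_prefix.
have rho0 : 0 <= rho by rewrite /rho; lra.
apply: le_trans (sum_flip_iter_le rho0 prefix_bhattS) _.
rewrite (eq_bigr _ (fun y _ => prefix_bhatt0 y)) sumr_const card_mx card_Fp // mul1n.
by rewrite -mulr_natr natrX mul1r -exprMn divfK ?pnatr_eq0.
Qed.

Lemma sum_lin_distr : \sum_y lin_distr a b y = 1.
Proof.
pose L x : 'rV['F_2]_n := \row_i affine_map (a i) (b i) x.
have fibreE y : [set x | [forall i, affine_map (a i) (b i) x == y 0 i]] = [set x | L x == y].
  apply/setP => x; rewrite !inE; apply/forallP/eqP => [Lx | <- i]; last by rewrite mxE.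
  by apply/rowP => i; rewrite mxE; apply/eqP.
rewrite /lin_distr -mulr_suml -natr_sum.
under eq_bigr => y _ do rewrite fibreE.
by rewrite sum_card_fibres divff ?natr_card_rV_neq0.
Qed.

End LinearForms.

Theorem theorem7p1 :
  exists c : realR, 0 < c /\
  exists N : nat, forall n : nat, (N <= n)%N ->
  forall (m : nat) (a : 'I_n -> 'rV['F_2]_m) (b : 'I_n -> 'F_2),
    1 - powR 2 (- (c * n%:R)) <= tv_dist (lin_distr a b) (ber_prod n (3^-1)).
Proof.
have rho0 : 0 < rho by rewrite /rho; lra.
exists (- ln rho / ln 2); split.
  by rewrite divr_gt0 // ?oppr_gt0 ?ln_gt0 ?ltr1n // ln_lt0 // rho0 /rho; lra.
exists 0%N => n _ m a b; rewrite powR2_neg_log2 //.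
apply: le_trans (tv_dist_ge_bhatt _ _ (sum_lin_distr a b) (sum_ber_prod n _)).
- by rewrite lerD2l lerN2 bhatt_lin_distr_ber_prod.
- by move=> y; rewrite divr_ge0.
- by move=> y; apply: prodr_ge0 => i _; apply/bit_prob_ge0/third_in01.
Qed.
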